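(* There is no binary self-orthogonal $[72,7,34]$ code.
   Context: A binary linear code $C$ is self-orthogonal if $C\subseteq C^\perp$. *)

From HB Require Import structures.
From mathcomp Require Import all_boot all_order all_algebra.
Set Implicit Arguments. Unset Strict Implicit. Unset Printing Implicit Defensive.
Import GRing.Theory.
Local Open Scope ring_scope.

Definition bcode (n : nat) := {vspace 'rV['F_2]_n}.

Definition wt (n : nat) (u : 'rV['F_2]_n) : nat := #|[set i | u 0 i != 0]|.

Definition bdot (n : nat) (u v : 'rV['F_2]_n) : 'F_2 := \sum_i u 0 i * v 0 i.

Definition self_orthogonal (n : nat) (C : bcode n) : Prop :=
  forall u v, u \in C -> v \in C -> bdot u v = 0.

Definition min_dist (n : nat) (C : bcode n) (d : nat) : Prop :=
  (exists2 c, c \in C & (c != 0) /\ wt c = d) /\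
  (forall c, c \in C -> c != 0 -> (d <= wt c)%N).

Definition is_nkd_code (n k d : nat) (C : bcode n) : Prop :=
  \dim C = k /\ min_dist C d.

(* In a self-orthogonal
   binary code all weights are even and wt (u + v) = wt u + wt v (mod 4), so
   the words of weight divisible by 4 form a subcode of index at most 2.  For
   a self-orthogonal [72,7,34] code this subcode has dimension at least 6 and
   minimum weight at least 36, but the Griesmer bound then asks for length
   36 + 18 + 9 + 5 + 3 + 2 = 73 > 72.  The Griesmer bound is proved by the
   residual-code induction: deleting the support of a minimum-weight word c
   keeps at least half of the words, and their weights are at least wt c / 2
   because wt v + wt (v + c) = wt c + 2 wt (residual c v). *)

From mathcomp Require Import all_boot all_order all_algebra all_field zify.
Set Implicit Arguments. Unset Strict Implicit.
Import GRing.Theory.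
Local Open Scope ring_scope.

Lemma F2_addr_neq0 (a b : 'F_2) : (a + b != 0) = (a != 0) (+) (b != 0).
Proof. by move: a b; do 2!case=> [[|[|//]] ?]. Qed.

Lemma F2_mulrE (a b : 'F_2) : a * b = ((a != 0) && (b != 0))%:R.
Proof. by move: a b; do 2!case=> [[|[|//]] ?]; apply/val_inj. Qed.

Lemma pchar_F2 : 2 \in [pchar 'F_2].
Proof. exact: pchar_Fp. Qed.

Section Weights.

Variable m : nat.
Implicit Types u v c : 'rV['F_2]_m.

Definition supp u : {set 'I_m} := [set i | u 0 i != 0].

Lemma card_supp u : #|supp u| = wt u.
Proof. by []. Qed.

Lemma opp_rowF2 v : - v = v.
Proof. by apply/rowP => i; rewrite mxE (oppr_pchar2 pchar_F2). Qed.

Lemma addr_eq0_F2 u v : (u + v == 0) = (u == v).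
Proof. by rewrite addr_eq0 opp_rowF2. Qed.

Lemma wt_eq0 v : (wt v == 0%N) = (v == 0).
Proof.
rewrite -card_supp cards_eq0; apply/eqP/eqP => [supp0|->]; last first.
  by apply/setP => i; rewrite !inE mxE eqxx.
apply/rowP => i; rewrite mxE; apply/eqP/(contraFT _ (in_set0 i)) => ui_neq0.
by rewrite -supp0 inE.
Qed.

Lemma wt0 : wt (0 : 'rV['F_2]_m) = 0%N.
Proof. by apply/eqP; rewrite wt_eq0. Qed.

Lemma suppD u v :
  supp (u + v) = (supp u :|: supp v) :\: (supp u :&: supp v).
Proof.
apply/setP => i; rewrite !inE mxE F2_addr_neq0.
by case: (u 0 i != 0); case: (v 0 i != 0).
Qed.

Lemma wtD u v : (wt (u + v) + 2 * #|supp u :&: supp v| = wt u + wt v)%N.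
Proof.
have sIU : supp u :&: supp v \subset supp u :|: supp v.
  exact: subset_trans (subsetIl _ _) (subsetUl _ _).
rewrite -!card_supp suppD cardsD (setIidPr sIU) -cardsUI.
have := subset_leq_card sIU; lia.
Qed.

Lemma bdotE u v : bdot u v = #|supp u :&: supp v|%:R.
Proof.
rewrite /bdot -sum1_card natr_sum [RHS]big_mkcond /=.
by apply: eq_bigr => i _; rewrite !inE F2_mulrE; case: (_ && _).
Qed.

End Weights.

Section SelfOrthogonal.

Variables (n : nat) (C : bcode n).
Hypothesis soC : self_orthogonal C.

Lemma dvdn_supp_inter u v :
  u \in C -> v \in C -> (2 %| #|supp u :&: supp v|)%N.
Proof. by move=> uC vC; rewrite (dvdn_pcharf pchar_F2) -bdotE soC. Qed.

Lemma wt_even u : u \in C -> (2 %| wt u)%N.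
Proof. by move=> uC; rewrite -card_supp -(setIid (supp u)) dvdn_supp_inter. Qed.

Lemma wtD_mod4 u v : u \in C -> v \in C -> wt (u + v) = (wt u + wt v)%N %[mod 4].
Proof.
move=> uC vC; rewrite -wtD; have /dvdnP[j ->] := dvdn_supp_inter uC vC.
by rewrite mulnCA addnC modnMDl.
Qed.

Definition doubly_even_part : {set 'rV['F_2]_n} :=
  [set v | (v \in C) && (4 %| wt v)%N].

Lemma doubly_even_part_addr_closed : addr_closed doubly_even_part.
Proof.
split=> [|u v]; first by rewrite inE mem0v wt0.
rewrite !inE => /andP[uC u4] /andP[vC v4]; rewrite memvD //=.
by rewrite /dvdn wtD_mod4 // -modnDm (eqP u4) (eqP v4).
Qed.

Lemma card_doubly_even_part : (#|C| <= 2 * #|doubly_even_part|)%N.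
Proof.
set S := doubly_even_part; set N := [set v | (v \in C) && ~~ (4 %| wt v)%N].
have splitC : #|C| = (#|S| + #|N|)%N.
  rewrite -cardsUI (_ : S :&: N = set0) ?cards0 ?addn0; last first.
    by apply/setP => v; rewrite !inE; case: (4 %| _)%N; rewrite ?andbF.
  by apply: eq_card => v; rewrite !inE -andb_orr orbN andbT.
suff : (#|N| <= #|S|)%N by lia.
have [N0 | [c0 c0N]] := set_0Vmem N; first by rewrite N0 cards0.
move: c0N; rewrite inE => /andP[c0C c0_not4].
rewrite -(card_imset _ (addIr c0)).
apply/subset_leq_card/subsetP => _ /imsetP[v + ->].
rewrite !inE => /andP[vC v_not4]; rewrite memvD //=.
have := wtD_mod4 vC c0C; have := wt_even vC; have := wt_even c0C.
move: v_not4 c0_not4; rewrite /dvdn; lia.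
Qed.

End SelfOrthogonal.

(* [griesmer_bound k d] is [\sum_(i < k) ceil (d / 2 ^ i)]. *)
Fixpoint griesmer_bound (k d : nat) : nat :=
  if k is k'.+1 then d + griesmer_bound k' (uphalf d) else 0.

Lemma leq_griesmer_bound k d d' :
  (d <= d')%N -> (griesmer_bound k d <= griesmer_bound k d')%N.
Proof.
elim: k d d' => [//|k IHk] d d' le_dd' /=.
by rewrite leq_add // IHk //; lia.
Qed.

Section Residual.

Variable m : nat.
Implicit Types u v c : 'rV['F_2]_m.
Implicit Types S : {set 'rV['F_2]_m}.

Definition residual c v : 'rV['F_2]_m := \row_i (if c 0 i == 0 then v 0 i else 0).

Lemma residualD c u v : residual c (u + v) = residual c u + residual c v.
Proof. by apply/rowP => i; rewrite !mxE; case: ifP; rewrite ?addr0. Qed.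

Lemma residual0 c : residual c 0 = 0.
Proof. by apply/rowP => i; rewrite !mxE if_same. Qed.

Lemma residual_self c : residual c c = 0.
Proof. by apply/rowP => i; rewrite !mxE; case: eqP. Qed.

Lemma supp_residual c v : supp (residual c v) = supp v :\: supp c.
Proof.
by apply/setP => i; rewrite !inE mxE negbK; case: (c 0 i == 0); rewrite ?eqxx.
Qed.

Lemma wt_residual c v : (wt v + wt (v + c) = wt c + 2 * wt (residual c v))%N.
Proof.
have := wtD v c; rewrite -!card_supp supp_residual cardsD.
have := subset_leq_card (subsetIl (supp v) (supp c)); lia.
Qed.

Lemma residual_image_addr_closed c S :
  addr_closed S -> addr_closed (residual c @: S).
Proof.
move=> [S0 SD]; split; first by apply/imsetP; exists 0; rewrite ?residual0.
move=> _ _ /imsetP[u uS ->] /imsetP[v vS ->].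
by apply/imsetP; exists (u + v); rewrite ?SD ?residualD.
Qed.

Lemma exists_min_wt S :
  (exists2 v, v \in S & v != 0) ->
  exists c, [/\ c \in S, c != 0 &
              forall v, v \in S -> v != 0 -> (wt c <= wt v)%N].
Proof.
case=> v vS v_neq0.
case: (@arg_minnP _ v [pred u | (u \in S) && (u != 0)] (@wt m)) => [|c].
  by rewrite /= vS.
move=> /andP[cS c_neq0] c_min.
by exists c; split=> // u uS u_neq0; apply: c_min; rewrite /= uS.
Qed.

Section ResidualOfMinimalWord.

Variables (S : {set 'rV['F_2]_m}) (c : 'rV['F_2]_m).
Hypotheses (S_closed : addr_closed S) (cS : c \in S) (c_neq0 : c != 0).
Hypothesis c_min : forall v, v \in S -> v != 0 -> (wt c <= wt v)%N.

Lemma residual_eq0 v : v \in S -> residual c v = 0 -> v = 0 \/ v = c.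
Proof.
move=> vS res0; have [-> | v_neq0] := eqVneq v 0; [by left | right].
have wt_vc0 : wt (v + c) = 0%N.
  by have := c_min vS v_neq0; have := wt_residual c v; rewrite res0 wt0; lia.
by move/eqP: wt_vc0; rewrite wt_eq0 addr_eq0_F2 => /eqP.
Qed.

Lemma card_residual_image : (#|S| <= 2 * #|residual c @: S|)%N.
Proof.
have [i0] : exists i0, i0 \in supp c.
  by apply/set0Pn; rewrite -cards_eq0 card_supp wt_eq0.
rewrite inE => c_i0.
(* The fibres of [residual c] on [S] are the pairs [{v, v + c}], which the
   coordinate [i0] separates. *)
pose f v := (residual c v, v 0 i0).
have f_inj : {in S &, injective f}.
  move=> u v uS vS [res_uv i0_uv].
  have uvS : u + v \in S by case: S_closed => _; apply.
  have : residual c (u + v) = 0.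
    by apply/eqP; rewrite residualD res_uv addr_eq0_F2.
  case/(residual_eq0 uvS) => [/eqP | uvc]; first by rewrite addr_eq0_F2 => /eqP.
  by move: c_i0; rewrite -uvc mxE i0_uv (addrr_pchar2 pchar_F2) eqxx.
have f_S : f @: S \subset setX (residual c @: S) [set: 'F_2].
  by apply/subsetP => _ /imsetP[v vS ->]; rewrite in_setX in_setT andbT imset_f.
rewrite -(card_in_imset f_inj) mulnC.
by have := subset_leq_card f_S; rewrite cardsX cardsT card_Fp.
Qed.

Lemma wt_residual_ge v :
  v \in S -> residual c v != 0 -> (uphalf (wt c) <= wt (residual c v))%N.
Proof.
move=> vS res_neq0.
have v_neq0 : v != 0 by apply: contraNneq res_neq0 => ->; rewrite residual0.
have vc_neq0 : v + c != 0.
  apply: contraNneq res_neq0 => /eqP; rewrite addr_eq0_F2 => /eqP ->.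
  by rewrite residual_self.
have vcS : v + c \in S by case: S_closed => _; apply.
have := wt_residual c v; have := c_min vS v_neq0; have := c_min vcS vc_neq0; lia.
Qed.

End ResidualOfMinimalWord.

Lemma griesmer k d S (U : {set 'I_m}) :
    addr_closed S -> (forall u, u \in S -> supp u \subset U) ->
    (2 ^ k <= #|S|)%N -> (forall u, u \in S -> u != 0 -> (d <= wt u)%N) ->
  (griesmer_bound k d <= #|U|)%N.
Proof.
elim: k d S U => [//|k IHk] d S U S_closed suppS cardS wtS /=.
have [|c [cS c_neq0 c_min]] := exists_min_wt (S := S).
  have /card_gt1P[x [y [xS yS xy]]] : (1 < #|S|)%N.
    by apply: leq_trans cardS; rewrite expnS leq_pmulr ?expn_gt0.
  by have [x0 | ] := eqVneq x 0; [exists y; rewrite // -x0 eq_sym | exists x].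
have residual_bound : (griesmer_bound k (uphalf (wt c)) <= #|U :\: supp c|)%N.
  apply: (IHk _ (residual c @: S)).
  - exact: residual_image_addr_closed.
  - by move=> _ /imsetP[v vS ->]; rewrite supp_residual setSD ?suppS.
  - rewrite -(leq_pmul2l (isT : 0 < 2)%N) -expnS.
    exact: leq_trans cardS (card_residual_image S_closed cS c_neq0 c_min).
  - move=> _ /imsetP[v vS ->].
    exact: (wt_residual_ge S_closed cS c_neq0 c_min vS).
have le_dc : (d <= wt c)%N by apply: wtS.
have supp_cU : supp c \subset U by apply: suppS.
have le_cU : (wt c <= #|U|)%N by rewrite -card_supp subset_leq_card.
have le_half : (uphalf d <= uphalf (wt c))%N by lia.
move: residual_bound; rewrite cardsD (setIidPr supp_cU) card_supp leq_subRL //.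
exact: leq_trans (leq_add le_dc (leq_griesmer_bound k le_half)).
Qed.

End Residual.

Theorem proposition6p10 :
  ~ exists C : bcode 72, is_nkd_code 7 34 C /\ self_orthogonal C.
Proof.
move=> [C [[dimC [_ wtC]] soC]].
set S := doubly_even_part C.
have cardS : (2 ^ 6 <= #|S|)%N.
  have := card_doubly_even_part soC.
  by rewrite card_vspace dimC card_Fp // expnS leq_pmul2l.
have wtS u : u \in S -> u != 0 -> (36 <= wt u)%N.
  rewrite inE => /andP[uC wt4] u_neq0; have := wtC u uC u_neq0.
  by move: wt4; rewrite /dvdn; lia.
have := griesmer (doubly_even_part_addr_closed soC)
  (fun u _ => subsetT (supp u)) cardS wtS.
by rewrite cardsT card_ord.
Qed.
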